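(* Let $X=\{a_1,\dots,a_\ell\}$ be a finite set of $\ell$ distinct points, $N\ge2$, let $\gamma_*$ be an extreme point of $\mathcal{P}_{sym}(X^N)$ and let $\lambda=M_1\gamma_*$. Then: (a) $\gamma_*$ is the unique maximizer over $\gamma\in\mathcal{P}_{sym}(X^N)$ of $$C_\lambda[\gamma]=N^2\sum_{i=1}^\ell\lambda_i(M_1\gamma)_i+C_{GS}[\gamma];$$ (b) in particular, $\gamma_*$ is the unique maximizer of $C_{GS}[\gamma]$ over $\gamma\in\mathcal{P}_{sym}(X^N)$ subject to $M_1\gamma=\lambda$.
   Context: Probability measures on $X$ are identified with vectors $(\lambda_i)$, $\lambda_i=\lambda(\{a_i\})$. The symmetrization operator is $(S\gamma)(A_1\times\cdots\times A_N)=\frac1{N!}\sum_{\sigma\in S_N}\gamma(A_{\sigma(1)}\times\cdots\times A_{\sigma(N)})$; $\mathcal{P}_{sym}(X^N)$ is the set of probability measures $\gamma$ on $X^N$ with $S\gamma=\gamma$; $(M_1\gamma)(A)=\gamma(A\times X^{N-1})$. The Gangbo–Święch cost is $C_{GS}[\gamma]=\int_{X^N}\sum_{1\le i<j\le N}d(x_i,x_j)^p\,d\gamma(x_1,\dots,x_N)$ ($1\le p<\infty$), with $d$ the discrete metric $d(x,y)=1$ for $x\ne y$, $d(x,x)=0$. *)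

From HB Require Import structures.
From mathcomp Require Import all_boot all_order all_fingroup all_algebra.
From mathcomp Require Import reals exp.
Set Implicit Arguments. Unset Strict Implicit. Unset Printing Implicit Defensive.
Import Order.TTheory GRing.Theory Num.Theory.
Local Open Scope ring_scope.

Section Defs.
Variables (R : realType) (X : finType) (N : nat).

(* A (finite, hence discrete) measure on X^N, identified with its point masses
   gamma({(x_1,...,x_N)}). *)
Definition meas := {ffun N.-tuple X -> R}.

Definition is_prob (g : meas) : Prop :=
  (forall x, 0 <= g x) /\ \sum_x g x = 1.

Definition permt (s : 'S_N) (x : N.-tuple X) : N.-tuple X :=
  [tuple tnth x (s i) | i < N].

(* symmetrization operator S, evaluated on singletons
   {x_1} x ... x {x_N} (which determine the measure). *)
Definition symmetrize (g : meas) : meas :=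
  [ffun x => (N`!%:R)^-1 * \sum_(s : 'S_N) g (permt s x)].

Definition Psym (g : meas) : Prop := is_prob g /\ symmetrize g = g.

Definition M1 (g : meas) : {ffun X -> R} :=
  [ffun a => \sum_(x : N.-tuple X | ohead x == Some a) g x].

Definition extreme_Psym (g : meas) : Prop :=
  Psym g /\
  forall (g1 g2 : meas) (t : R), Psym g1 -> Psym g2 -> 0 < t < 1 ->
    (forall x, g x = t * g1 x + (1 - t) * g2 x) -> g1 = g /\ g2 = g.

Definition ddisc (x y : X) : R := if x == y then 0 else 1.

Definition CGS (p : R) (g : meas) : R :=
  \sum_x g x * \sum_(i < N) \sum_(j < N | (i < j)%N)
      powR (ddisc (tnth x i) (tnth x j)) p.

Definition Clam (p : R) (lam : {ffun X -> R}) (g : meas) : R :=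
  (N%:R ^+ 2) * \sum_a lam a * M1 g a + CGS p g.

End Defs.

From HB Require Import structures.
From mathcomp Require Import all_boot all_order all_fingroup all_algebra.
From mathcomp Require Import reals exp ring.
Set Implicit Arguments. Unset Strict Implicit. Unset Printing Implicit Defensive.
Import Order.TTheory GRing.Theory Num.Theory.
Local Open Scope ring_scope.

(* An extreme point of P_sym(X^N) is supported on the permutation orbit of a
   single tuple x0: otherwise it is a proper convex combination of its
   normalised restrictions to that orbit and to its complement, both of which
   are symmetric.  Let n_a(x) = occ x a be the number of occurrences of a in x.
   For the discrete metric the cost of x is (N^2 - sum_a n_a(x)^2) / 2, and for
   symmetric gamma, N (M_1 gamma)_a is the gamma-mean of n_a.  As
   lambda = n(x0) / N, completing the square gives
     C_lambda[gamma] = (N^2 + |n(x0)|^2) / 2 - 1/2 sum_x gamma(x) |n(x) - n(x0)|^2,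
   and the last sum vanishes exactly when gamma lives on the orbit of x0, which
   carries a unique symmetric probability measure.  Part (b) follows because
   C_lambda and C_GS differ by a function of M_1 gamma. *)

Lemma perm_eq_count_memP (T : eqType) (s1 s2 : seq T) :
  reflect (forall a, count_mem a s1 = count_mem a s2) (perm_eq s1 s2).
Proof.
apply: (iffP idP) => [/seq.permP eq_count a | eq_count]; first exact: eq_count.
by apply/allP => a _; rewrite /= eq_count.
Qed.

Lemma sum_pairs_lt (V : nmodType) (n : nat) (f : 'I_n -> 'I_n -> V) :
  (forall i j, f i j = f j i) -> (forall i, f i i = 0) ->
  \sum_(i < n) \sum_(j < n) f i j = (\sum_(i < n) \sum_(j < n | (i < j)%N) f i j) *+ 2.
Proof.
move=> f_sym f_diag.
have lower : \sum_(i < n) \sum_(j < n | (j < i)%N) f i j =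
              \sum_(i < n) \sum_(j < n | (i < j)%N) f i j.
  under eq_bigr do rewrite big_mkcond; under [RHS]eq_bigr do rewrite big_mkcond.
  rewrite exchange_big /=.
  by apply: eq_bigr => i _; apply: eq_bigr => j _; rewrite f_sym.
rewrite mulr2n -{1}lower -big_split /=; apply: eq_bigr => i _.
rewrite [in RHS]big_mkcond [X in _ + X]big_mkcond -big_split /=.
apply: eq_bigr => j _; case: ltngtP => [||/val_inj ->]; by rewrite ?addr0 ?add0r ?f_diag.
Qed.

Section PermTuple.
Variables (X : finType) (N : nat).
Implicit Types (x y : N.-tuple X) (s t : 'S_N).

Lemma permtM s t x : permt t (permt s x) = permt (t * s)%g x.
Proof. by apply: eq_from_tnth => i; rewrite !tnth_map !tnth_ord_tuple permM. Qed.

Lemma permt1 x : permt 1%g x = x.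
Proof. by apply: eq_from_tnth => i; rewrite !tnth_map !tnth_ord_tuple perm1. Qed.

Lemma permtK s : cancel (@permt X N s) (permt s^-1%g).
Proof. by move=> x; rewrite permtM mulVg permt1. Qed.

Lemma permt_inj s : injective (@permt X N s).
Proof. exact: can_inj (permtK s). Qed.

Lemma perm_eq_permtP x y : reflect (exists s, x = permt s y) (perm_eq x y).
Proof.
by apply: (iffP tuple_permP) => -[s xE]; exists s; [apply: val_inj | rewrite xE].
Qed.

Lemma perm_eq_permt s x : perm_eq (permt s x) x.
Proof. by apply/perm_eq_permtP; exists s. Qed.

Lemma count_mem_tnth x a : count_mem a x = (\sum_(i < N) (tnth x i == a))%N.
Proof.
rewrite -sum1_count big_tuple big_mkcond /=.
by apply: eq_bigr => i _; case: eqP.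
Qed.

Lemma ohead_tnth (N_gt0 : (0 < N)%N) x : ohead x = Some (tnth x (Ordinal N_gt0)).
Proof.
case: x => [[|y s] size_x]; first by exfalso; move: N_gt0; rewrite -(eqP size_x).
by rewrite /= (tnth_nth y).
Qed.

End PermTuple.

Section SymmetricMeasures.
Variables (R : realType) (X : finType) (N : nat).
Implicit Types (g : meas R X N) (x : N.-tuple X) (s : 'S_N) (a : X).

Definition perm_invariant g := forall s x, g (permt s x) = g x.

Lemma PsymP g : Psym g <-> is_prob g /\ perm_invariant g.
Proof.
split=> [[g_prob g_sym] | [g_prob g_inv]].
  split=> // s x; rewrite -[in LHS]g_sym -[in RHS]g_sym !ffunE; congr (_ * _).
  under eq_bigr do rewrite permtM.
  by rewrite [RHS](reindex_inj (mulIg s)).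
split=> //; apply/ffunP => x; rewrite ffunE.
under eq_bigr do rewrite g_inv.
rewrite sumr_const card_Sn -[g x *+ _]mulr_natr mulrC mulfK //.
by rewrite pnatr_eq0 -lt0n fact_gt0.
Qed.

Lemma sum_permt g (h : N.-tuple X -> R) s : perm_invariant g ->
  \sum_x g x * h (permt s x) = \sum_x g x * h x.
Proof.
move=> g_inv; under eq_bigr do rewrite -(g_inv s).
by rewrite [RHS](reindex_inj (@permt_inj X N s)).
Qed.

Definition occ x a : R := (count_mem a x)%:R.

Lemma M1_occ (N_gt0 : (0 < N)%N) g a : perm_invariant g ->
  N%:R * M1 g a = \sum_x g x * occ x a.
Proof.
move=> g_inv; pose i0 := Ordinal N_gt0.
have M1_tnth i : M1 g a = \sum_x g x * (tnth x i == a)%:R.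
  rewrite -(sum_permt _ (tperm i0 i) g_inv) /M1 ffunE big_mkcond /=.
  apply: eq_bigr => x _; rewrite tnth_map tnth_ord_tuple tpermR (ohead_tnth N_gt0).
  by rewrite (inj_eq (@Some_inj _)); case: eqP; rewrite ?mulr1 ?mulr0.
have -> : N%:R * M1 g a = \sum_(i < N) M1 g a by rewrite sumr_const card_ord mulr_natl.
rewrite (eq_bigr _ (fun i _ => M1_tnth i)) exchange_big; apply: eq_bigr => x _.
by rewrite -mulr_sumr /occ count_mem_tnth natr_sum.
Qed.

Definition orbit_supported g x0 := forall x, ~~ perm_eq x x0 -> g x = 0.

Lemma orbit_supportedE g x0 x : perm_invariant g -> orbit_supported g x0 ->
  g x = g x0 * (perm_eq x x0)%:R.
Proof.
move=> g_inv g_orb; case: (boolP (perm_eq x x0)) => [/perm_eq_permtP[s ->] | /g_orb ->].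
  by rewrite mulr1 g_inv.
by rewrite mulr0.
Qed.

Lemma Psym_orbit_supported_uniq g1 g2 x0 : Psym g1 -> Psym g2 ->
  orbit_supported g1 x0 -> orbit_supported g2 x0 -> g1 = g2.
Proof.
move=> /PsymP[[_ g1_sum] g1_inv] /PsymP[[_ g2_sum] g2_inv] g1_orb g2_orb.
have mass g : perm_invariant g -> orbit_supported g x0 ->
    \sum_x g x = g x0 * \sum_(x : N.-tuple X) (perm_eq x x0)%:R.
  by move=> g_inv g_orb; rewrite mulr_sumr; apply: eq_bigr => x _; apply: orbit_supportedE.
have orbit_neq0 : \sum_(x : N.-tuple X) ((perm_eq x x0)%:R : R) != 0.
  by apply: contra_eq_neq g1_sum => orbit0; rewrite mass // orbit0 mulr0 eq_sym oner_neq0.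
have g12_x0 : g1 x0 = g2 x0 by apply: (mulIf orbit_neq0); rewrite -!mass ?g1_sum ?g2_sum.
apply/ffunP => x.
by rewrite (orbit_supportedE x g1_inv g1_orb) (orbit_supportedE x g2_inv g2_orb) g12_x0.
Qed.

Definition conditional g (A : pred (N.-tuple X)) : meas R X N :=
  [ffun x => (A x)%:R * g x / \sum_(y | A y) g y].

Lemma Psym_conditional g A : Psym g -> (forall s x, A (permt s x) = A x) ->
  0 < \sum_(x | A x) g x -> Psym (conditional g A).
Proof.
move=> /PsymP[[g_ge0 _] g_inv] A_inv mass_gt0; apply/PsymP; split; [split|].
- by move=> x; rewrite ffunE divr_ge0 ?mulr_ge0 // ltW.
- have restrict : \sum_x (A x)%:R * g x = \sum_(x | A x) g x.
    rewrite [RHS]big_mkcond; apply: eq_bigr => x _.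
    by case: (A x); rewrite ?mul1r ?mul0r.
  under eq_bigr do rewrite ffunE.
  by rewrite -mulr_suml restrict mulfV // gt_eqF.
- by move=> s x; rewrite !ffunE A_inv g_inv.
Qed.

Lemma conditional_mix g A : is_prob g -> 0 < \sum_(x | A x) g x < 1 ->
  forall x, g x = (\sum_(y | A y) g y) * conditional g A x +
                  (1 - \sum_(y | A y) g y) * conditional g (predC A) x.
Proof.
move=> [_ g_sum] /andP[t_gt0 t_lt1] x.
have massC : \sum_(y | predC A y) g y = 1 - \sum_(y | A y) g y.
  by rewrite -g_sum [\sum_x g x](bigID A) /= addrAC subrr add0r.
rewrite !ffunE massC /=; case: (A x); rewrite /= ?mul1r ?mul0r ?mulr0 ?addr0 ?add0r.
  by rewrite mulrCA mulfV ?mulr1 // gt_eqF.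
by rewrite mulrCA mulfV ?mulr1 // gt_eqF // subr_gt0.
Qed.

Lemma extreme_Psym_orbit_supported gs : extreme_Psym gs ->
  exists x0, orbit_supported gs x0.
Proof.
move=> [gs_sym gs_ext]; have /PsymP[[gs_ge0 gs_sum] _] := gs_sym.
have : \sum_x gs x != 0 by rewrite gs_sum oner_neq0.
rewrite psumr_neq0 // => /hasP[x0 _ /andP[_ gs_x0]].
exists x0; pose A := [pred x : N.-tuple X | perm_eq x x0]; pose t := \sum_(x | A x) gs x.
have A_inv s x : A (permt s x) = A x by rewrite /= (permPl (perm_eq_permt s x)).
have AC_inv s x : predC A (permt s x) = predC A x by rewrite /= (permPl (perm_eq_permt s x)).
have t_gt0 : 0 < t.
  by rewrite /t (bigD1 x0) /= ?perm_refl // ltr_pwDl // sumr_ge0.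
have rest : \sum_(x | ~~ A x) gs x = 1 - t.
  by rewrite -gs_sum [\sum_x gs x](bigID A) /= addrAC subrr add0r.
have [t1 | t_neq1] := eqVneq t 1.
  by apply: psumr_eq0P => [x _ | ]; rewrite ?rest ?t1 ?subrr.
have t_lt1 : t < 1 by rewrite lt_neqAle t_neq1 -subr_ge0 -rest sumr_ge0.
have t01 : 0 < t < 1 by rewrite t_gt0.
have restC_gt0 : 0 < \sum_(x | predC A x) gs x by rewrite rest subr_gt0.
have [_ gsC] := gs_ext _ _ t (Psym_conditional gs_sym A_inv t_gt0)
  (Psym_conditional gs_sym AC_inv restC_gt0) t01 (conditional_mix (A := A) gs_sym.1 t01).
by move: gs_x0; rewrite -gsC ffunE /= perm_refl !mul0r ltxx.
Qed.

Lemma sum_occ_sqr x :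
  \sum_a occ x a ^+ 2 = \sum_(i < N) \sum_(j < N) ((tnth x i == tnth x j)%:R : R).
Proof.
transitivity (\sum_a \sum_(i < N) \sum_(j < N)
                ((tnth x i == a)%:R * (tnth x j == a)%:R : R)).
  apply: eq_bigr => a _; rewrite /occ count_mem_tnth natr_sum expr2 mulr_suml.
  by apply: eq_bigr => i _; rewrite mulr_sumr.
rewrite exchange_big; apply: eq_bigr => i _; rewrite exchange_big; apply: eq_bigr => j _.
rewrite (bigD1 (tnth x i)) //= eqxx mul1r big1 ?addr0 1?eq_sym // => a a_neq.
by rewrite eq_sym (negPf a_neq) mul0r.
Qed.

Lemma sum_disagreements x :
  \sum_(i < N) \sum_(j < N | (i < j)%N) ((tnth x i != tnth x j)%:R : R) =
  (N%:R ^+ 2 - \sum_a occ x a ^+ 2) / 2.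
Proof.
have all_pairs : \sum_(i < N) \sum_(j < N) ((tnth x i != tnth x j)%:R : R) +
                 \sum_(i < N) \sum_(j < N) ((tnth x i == tnth x j)%:R : R) = N%:R ^+ 2.
  rewrite -big_split (eq_bigr (fun=> N%:R)) ?sumr_const ?card_ord ?expr2 ?mulr_natl //.
  move=> i _; rewrite -big_split (eq_bigr (fun=> 1)) ?sumr_const ?card_ord //.
  by move=> j _ /=; case: eqP; rewrite ?add0r ?addr0.
rewrite sum_occ_sqr -all_pairs addrK (sum_pairs_lt (f := fun i j => _)) => [||i]; last 2 first.
- by move=> i j; rewrite eq_sym.
- by rewrite eqxx.
by rewrite -[_ *+ 2]mulr_natr mulfK // pnatr_eq0.
Qed.

Lemma CGS_occ p g : p != 0 ->
  CGS p g = \sum_x g x * ((N%:R ^+ 2 - \sum_a occ x a ^+ 2) / 2).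
Proof.
move=> p_neq0; apply: eq_bigr => x _; rewrite -sum_disagreements; congr (_ * _).
apply: eq_bigr => i _; apply: eq_bigr => j _.
by rewrite /ddisc; case: eqP => _; rewrite ?powR0 ?powR1.
Qed.

Definition occ_dist x0 x : R := \sum_a (occ x a - occ x0 a) ^+ 2.

Lemma occ_dist_ge0 x0 x : 0 <= occ_dist x0 x.
Proof. by apply: sumr_ge0 => a _; apply: sqr_ge0. Qed.

Lemma occ_dist_eq0 x0 x : (occ_dist x0 x == 0) = perm_eq x x0.
Proof.
apply/eqP/perm_eq_count_memP => [dist0 a | eq_count].
  have /eqP := psumr_eq0P (fun a _ => sqr_ge0 _) dist0 (i := a) isT.
  by rewrite sqrf_eq0 subr_eq0 eqr_nat => /eqP.
by rewrite /occ_dist big1 // => a _; rewrite /occ eq_count subrr expr0n.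
Qed.

Lemma sum_occ_dist_eq0P g x0 : (forall x, 0 <= g x) ->
  \sum_x g x * occ_dist x0 x = 0 <-> orbit_supported g x0.
Proof.
move=> g_ge0; split=> [sum0 x x_out | g_orb].
  have /eqP := psumr_eq0P (fun x _ => mulr_ge0 (g_ge0 x) (occ_dist_ge0 x0 x)) sum0 (i := x) isT.
  by rewrite mulf_eq0 occ_dist_eq0 (negPf x_out) orbF => /eqP.
apply: big1 => x _; case: (boolP (perm_eq x x0)) => [| /g_orb ->]; last by rewrite mul0r.
by rewrite -occ_dist_eq0 => /eqP ->; rewrite mulr0.
Qed.

Lemma M1_orbit_supported (N_gt0 : (0 < N)%N) g x0 a : Psym g -> orbit_supported g x0 ->
  M1 g a = occ x0 a / N%:R.
Proof.
move=> /PsymP[[_ g_sum] g_inv] g_orb.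
have N_neq0 : N%:R != 0 :> R by rewrite pnatr_eq0 -lt0n.
rewrite -[M1 g a](mulKf N_neq0) M1_occ // mulrC; congr (_ * _).
transitivity (\sum_x g x * occ x0 a); last by rewrite -mulr_suml g_sum mul1r.
apply: eq_bigr => x _; case: (boolP (perm_eq x x0)) => [/perm_eq_count_memP eq_count | /g_orb ->].
  by rewrite /occ eq_count.
by rewrite !mul0r.
Qed.

Lemma Clam_occ_dist (N_gt0 : (0 < N)%N) p (lam : {ffun X -> R}) g x0 : p != 0 -> Psym g ->
  (forall a, lam a = occ x0 a / N%:R) ->
  Clam p lam g = (N%:R ^+ 2 + \sum_a occ x0 a ^+ 2) / 2 - (\sum_x g x * occ_dist x0 x) / 2.
Proof.
move=> p_neq0 /PsymP[[_ g_sum] g_inv] lamE.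
have N_neq0 : N%:R != 0 :> R by rewrite pnatr_eq0 -lt0n.
have marginal_term : N%:R ^+ 2 * \sum_a lam a * M1 g a =
                     \sum_x g x * \sum_a occ x0 a * occ x a.
  rewrite mulr_sumr (eq_bigr (fun a => occ x0 a * (N%:R * M1 g a))) => [|a _]; last first.
    by rewrite lamE; field.
  under eq_bigr do rewrite M1_occ // mulr_sumr.
  rewrite exchange_big; apply: eq_bigr => x _; rewrite mulr_sumr.
  by apply: eq_bigr => a _; rewrite mulrCA.
rewrite /Clam marginal_term CGS_occ // -big_split /= mulr_suml.
rewrite [X in X - _](_ : _ = \sum_x g x * ((N%:R ^+ 2 + \sum_a occ x0 a ^+ 2) / 2)); last first.
  by rewrite -mulr_suml g_sum mul1r.
rewrite -sumrB; apply: eq_bigr => x _.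
have square : occ_dist x0 x = \sum_a occ x a ^+ 2 - (\sum_a occ x0 a * occ x a) *+ 2
                              + \sum_a occ x0 a ^+ 2.
  rewrite /occ_dist -sumrMnl -sumrB -big_split; apply: eq_bigr => a _ /=; ring.
by rewrite square; field.
Qed.

End SymmetricMeasures.

Theorem corollary3p3 (R : realType) (X : finType) (N : nat) (p : R)
  (hN : (2 <= N)%N) (hp : 1 <= p) (gs : meas R X N) :
  extreme_Psym gs ->
  (forall g : meas R X N, Psym g -> g != gs ->
     Clam p (M1 gs) g < Clam p (M1 gs) gs) /\
  (forall g : meas R X N, Psym g -> M1 g = M1 gs -> g != gs ->
     CGS p g < CGS p gs).
Proof.
move=> gs_ext; have N_gt0 : (0 < N)%N by apply: leq_trans hN.
have p_neq0 : p != 0 by rewrite gt_eqF // (lt_le_trans ltr01 hp).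
have gs_sym := gs_ext.1.
have [x0 gs_orb] := extreme_Psym_orbit_supported gs_ext.
have ClamE g (g_sym : Psym g) :=
  Clam_occ_dist N_gt0 p_neq0 g_sym (fun a => M1_orbit_supported N_gt0 a gs_sym gs_orb).
have max_Clam g : Psym g -> g != gs -> Clam p (M1 gs) g < Clam p (M1 gs) gs.
  move=> g_sym g_neq; have [[g_ge0 _] _] := g_sym.
  rewrite !ClamE // (sum_occ_dist_eq0P x0 gs_sym.1.1).2 // mul0r subr0 gtrBl.
  rewrite divr_gt0 // lt_def sumr_ge0 ?andbT => [|x _]; last by rewrite mulr_ge0 ?occ_dist_ge0.
  apply: contra_neq g_neq => /(sum_occ_dist_eq0P x0 g_ge0) g_orb.
  exact: Psym_orbit_supported_uniq g_sym gs_sym g_orb gs_orb.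
split=> // g g_sym M1_eq g_neq.
by have := max_Clam g g_sym g_neq; rewrite /Clam M1_eq ltrD2l.
Qed.
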